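(* Let $\mathcal{H}\subseteq\mathcal{Y}^{\mathcal{X}}$ be a hypothesis class such that (i) every $h\in\mathcal{H}$ satisfies $|\mathrm{im}(h)|\le 2$, and (ii) the map $h\mapsto \mathrm{im}(h)$ is injective on $\mathcal{H}$ (i.e., $\mathrm{im}(h)\neq\mathrm{im}(h')$ whenever $h\ne h'$ in $\mathcal{H}$). Then $\mathcal{H}$ is learnable in both the PAC model and the transductive model.
   Context: $\mathrm{im}(h)=\{h(x):x\in\mathcal{X}\}$. Losses are 0-1 (realizable multiclass classification). For $S=(x_i)_{i\in[n]}\in\mathcal{X}^n$ and $h^*\in\mathcal{H}$, the transductive error of a learner $\mathcal{A}$ (a map from finite labeled sequences to functions $\mathcal{X}\to\mathcal{Y}$) is $\frac1n\sum_{i\in[n]}[\mathcal{A}(S_{-i},h^* )(x_i)\ne h^*(x_i)]$, where $\mathcal{A}(S_{-i},h^* )$ is its output on $((x_j,h^*(x_j)))_{j\ne i}$. $\mathcal{H}$ is transductively learnable if some learner $\mathcal{A}$ and $m:(0,1)\to\mathbb{N}$ satisfy: for all $\epsilon\in(0,1)$, $h^*\in\mathcal{H}$, and $S$ with $|S|\ge m(\epsilon)$, the transductive error is at most $\epsilon$. $\mathcal{H}$ is PAC learnable if some learner $\mathcal{A}$ and $m:(0,1)^2\to\mathbb{N}$ satisfy: for every distribution $\mathcal{D}$ on $\mathcal{X}\times\mathcal{Y}$ realizable by some $h\in\mathcal{H}$ (i.e., $\Pr_{(x,y)\sim\mathcal{D}}[h(x)\ne y]=0$) and all $\epsilon,\delta\in(0,1)$,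 if $S\sim\mathcal{D}^n$ with $n\ge m(\epsilon,\delta)$ then $\Pr_{(x,y)\sim\mathcal{D}}[\mathcal{A}(S)(x)\ne y]\le\epsilon$ with probability at least $1-\delta$. *)

From HB Require Import structures.
From mathcomp Require Import all_boot all_order all_algebra.
From mathcomp Require Import all_classical all_reals all_analysis.
Set Implicit Arguments. Unset Strict Implicit. Unset Printing Implicit Defensive.
Import Order.TTheory GRing.Theory Num.Theory.
Local Open Scope classical_set_scope.
Local Open Scope ring_scope.

Definition learner (X Y : Type) := seq (X * Y) -> X -> Y.

Definition im_card_le2 (X Y : Type) (h : X -> Y) : Prop :=
  (range h #<= `I_2)%card.

Definition labeled_without (X Y : Type) (n : nat) (S : n.-tuple X) (i : nat)
    (h : X -> Y) : seq (X * Y) :=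
  [seq (x, h x) | x <- take i S ++ drop i.+1 S].

Definition trans_error (R : realType) (X : Type) (Y : eqType) (A : learner X Y)
    (n : nat) (S : n.-tuple X) (h : X -> Y) : R :=
  (n%:R)^-1 * \sum_(i < n)
     (A (labeled_without S i h) (tnth S i) != h (tnth S i))%:R.

Definition transductively_learnable (R : realType) (X : Type) (Y : eqType)
    (H : set (X -> Y)) : Prop :=
  exists (A : learner X Y) (m : R -> nat),
    forall eps : R, 0 < eps < 1 ->
    forall h, H h ->
    forall n, (m eps <= n)%N -> forall S : n.-tuple X,
      @trans_error R X Y A n S h <= eps.

(* Q is the i.i.d. law D^n on n-tuples: it agrees with the product measure on
   all measurable rectangles (which determines it uniquely). *)
Definition iid_law (R : realType) d (T : measurableType d) (n : nat)
    (D : probability T R) (Q : probability (n.-tuple T) R) : Prop :=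
  forall B : 'I_n -> set T, (forall i, measurable (B i)) ->
    Q [set s | forall i, B i (tnth s i)] = (\prod_(i < n) D (B i))%E.

(* Pr_{(x,y)~D}[f x <> y] <= eps, measured by outer measure:
   the error set is covered by a measurable set of D-measure <= eps. *)
Definition risk_le (R : realType) d1 d2 (X : measurableType d1)
    (Y : measurableType d2) (D : probability (X * Y)%type R) (f : X -> Y)
    (eps : R) : Prop :=
  exists2 E : set (X * Y), measurable E &
    [set p | f p.1 != p.2] `<=` E /\ (D E <= eps%:E)%E.

Definition realizable_by (R : realType) d1 d2 (X : measurableType d1)
    (Y : measurableType d2) (D : probability (X * Y)%type R) (h : X -> Y) :=
  D.-negligible [set p | h p.1 != p.2].

(* "with probability at least 1 - delta" over S ~ D^n, via inner measure:
   the good event contains a measurable set of Q-measure >= 1 - delta. *)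
Definition PAC_learnable (R : realType) d1 d2 (X : measurableType d1)
    (Y : measurableType d2) (H : set (X -> Y)) : Prop :=
  exists (A : learner X Y) (m : R -> R -> nat),
    forall (D : probability (X * Y)%type R),
    (exists2 h, H h & realizable_by D h) ->
    forall eps delta : R, 0 < eps < 1 -> 0 < delta < 1 ->
    forall n, (m eps delta <= n)%N ->
    forall Q : probability (n.-tuple (X * Y)%type) R, iid_law D Q ->
    exists2 G : set (n.-tuple (X * Y)%type), measurable G &
      G `<=` [set S | risk_le D (A (tval S)) eps] /\
      ((1 - delta)%:E <= Q G)%E.

(** The learner returns the hypothesis of [H] that is consistent with the
    sample and whose image consists of observed labels; injectivity of
    [h |-> im h] makes it unique.  If there is none, the target [h] takes a
    value that was not observed, and as [|im h| <= 2] all observed labels are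
    then equal: the learner predicts this label everywhere.

    Transductively, a leave-one-out mistake at [x_i] therefore requires the
    label [h x_i] to occur nowhere else in the sample, which happens for at
    most two indices: the error is at most [2 / n].

    In the PAC model the learner can only err when all [n] labels equal one
    value [a] while the other value has mass more than [eps], an event of
    probability at most [(1 - eps)^n].  These events are measurable because a
    null cover [N] of the error set misses some graph point [(x0, h x0)], and
    the complement of the section of [N] at [x0] is the singleton
    [[set h x0]]. *)

From HB Require Import structures.
From mathcomp Require Import all_boot all_order all_algebra.
From mathcomp Require Import all_classical all_reals all_analysis.
From mathcomp Require Import zify ring lra.
Set Implicit Arguments. Unset Strict Implicit. Unset Printing Implicit Defensive.
Import Order.TTheory GRing.Theory Num.Theory.
Local Open Scope classical_set_scope.
Local Open Scope ring_scope.

Lemma im_card_le2_collide (T Y : Type) (h : T -> Y) : im_card_le2 h ->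
  forall x1 x2 x3, [\/ h x1 = h x2, h x2 = h x3 | h x1 = h x3].
Proof.
move=> /pcard_leP[f] x1 x2 x3.
have f_lt2 x : (f (h x) < 2)%N by exact: (@funS _ _ _ _ f (h x) (imageT h x)).
have f_inj x y : f (h x) = f (h y) -> h x = h y.
  by apply: inj; apply: mem_set; exact: imageT.
have [?|n12] := eqVneq (f (h x1)) (f (h x2)); first by constructor 1; exact: f_inj.
have [?|n23] := eqVneq (f (h x2)) (f (h x3)); first by constructor 2; exact: f_inj.
by constructor 3; apply: f_inj; move: (f_lt2 x1) (f_lt2 x2) (f_lt2 x3); lia.
Qed.

Lemma mem_nth_take_drop (T : eqType) (x0 : T) (s : seq T) (i j : nat) :
  (j < size s)%N -> j != i -> nth x0 s j \in take i s ++ drop i.+1 s.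
Proof.
move=> js ji; rewrite mem_cat; case: (ltnP j i) => ij.
  by rewrite -(nth_take x0 ij) mem_nth // size_take; case: ifP => _; lia.
have -> : j = (i.+1 + (j - i.+1))%N by lia.
by rewrite -nth_drop mem_nth ?orbT // size_drop; lia.
Qed.

Lemma card_isolated_le2 (I : finType) (T : Type) (Y : eqType)
    (f : I -> T) (h : T -> Y) : im_card_le2 h ->
  (#|[set i | [forall j, (j != i) ==> (h (f j) != h (f i))]]%SET| <= 2)%N.
Proof.
move=> h2; rewrite leqNgt; apply/negP => /card_gt2P[a [b [c [[]]]]].
rewrite !inE => /forall_inP Ua /forall_inP Ub /forall_inP Uc [ab bc ca].
case: (im_card_le2_collide h2 (f a) (f b) (f c)) => /eqP.
- by apply/negP; exact: Ub.
- by apply/negP; exact: Uc.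
- by apply/negP; apply: Uc; rewrite eq_sym.
Qed.

Section ImLearner.
Variables (X : eqType) (Y : pointedType) (H : set (X -> Y)).

Definition labels (s : seq (X * Y)) : set Y := [set p.2 | p in [set p | p \in s]].

Definition consistent (s : seq (X * Y)) (h : X -> Y) :=
  forall p, p \in s -> h p.1 = p.2.

Definition im_learner : learner X Y := fun s =>
  if pselect (exists h, [/\ H h, consistent s h & range h `<=` labels s]) is left e
  then projT1 (cid e) else fun=> head point [seq p.2 | p <- s].

Lemma im_learner_const s a : s != [::] -> (forall p, p \in s -> p.2 = a) ->
  im_learner s = fun=> a.
Proof.
move=> s0 sa; apply: funext => x; rewrite /im_learner; case: pselect => [e|_].
  case: cid => h /= [_ _ /(_ (h x) (imageT h x))[p ps <-]].
  exact: sa.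
by case: s s0 sa => [|p s] //= _; apply; rewrite inE eqxx.
Qed.

Hypothesis H_inj : forall h h', H h -> H h' -> range h = range h' -> h = h'.

Lemma im_learner_eq s h : H h -> consistent s h -> range h `<=` labels s ->
  im_learner s = h.
Proof.
move=> Hh hs hl; rewrite /im_learner; case: pselect => [e|[]]; last by exists h.
case: cid => h' /= [Hh' h's h'l]; apply: H_inj => //.
apply/seteqP; split=> y.
- by move=> /h'l[p ps <-]; exists p.1 => //; exact: hs.
- by move=> /hl[p ps <-]; exists p.1 => //; exact: h's.
Qed.

Lemma im_learner_dichotomy s h : H h -> im_card_le2 h -> consistent s h ->
  s != [::] ->
  im_learner s = h \/
  exists a, im_learner s = (fun=> a) /\ forall p, p \in s -> p.2 = a.
Proof.
move=> Hh h2 hs s0.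
have [hl|] := pselect (range h `<=` labels s); first by left; exact: im_learner_eq.
move=> /existsNP[_ /not_implyP[[xc _ <-] xc_new]]; right.
case: s s0 hs xc_new => [//|p0 s] _ hs xc_new.
suff s_p0 p : p \in p0 :: s -> p.2 = p0.2.
  by exists p0.2; split=> //; apply: im_learner_const.
move=> ps; rewrite -(hs p ps) -(hs p0 (mem_head _ _)).
case: (im_card_le2_collide h2 p.1 p0.1 xc) => // [hx|hx]; exfalso; apply: xc_new.
- by exists p0; [exact: mem_head | rewrite -hx hs //; exact: mem_head].
- by exists p; rewrite //= -hx hs.
Qed.

Lemma im_learner_loo_correct n (S : n.-tuple X) (i j : 'I_n) h :
  H h -> im_card_le2 h -> j != i -> h (tnth S j) = h (tnth S i) ->
  im_learner (labeled_without S i h) (tnth S i) = h (tnth S i).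
Proof.
move=> Hh h2 ji hji; set s := labeled_without S i h.
have hs : consistent s h by move=> p /mapP[x _ ->].
have js : (tnth S j, h (tnth S j)) \in s.
  apply: map_f; rewrite (tnth_nth (tnth S j)) mem_nth_take_drop //.
  by rewrite size_tuple.
have s0 : s != [::] by apply/eqP => s0; rewrite s0 in js.
case: (im_learner_dichotomy Hh h2 hs s0) => [-> //|[a [-> sa]]].
by rewrite -hji -(sa _ js).
Qed.

Lemma im_learner_trans_error_le (R : realType) n (S : n.-tuple X) h :
  H h -> im_card_le2 h -> @trans_error R X Y im_learner n S h <= 2 / n%:R.
Proof.
move=> Hh h2; rewrite /trans_error mulrC ler_wpM2r ?invr_ge0 //.
set isolated := [set i | [forall j, (j != i) ==> (h (tnth S j) != h (tnth S i))]]%SET.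
apply: (@le_trans _ _ #|isolated|%:R); last first.
  by rewrite ler_nat; exact: card_isolated_le2.
rewrite -natr_sum ler_nat -sum1_card [leqRHS]big_mkcond /=; apply: leq_sum => i _.
case: ifPn => [_|]; first exact: leq_b1.
rewrite inE negb_forall => /existsP[j]; rewrite negb_imply negbK => /andP[ji /eqP hji].
by rewrite (im_learner_loo_correct _ _ ji hji) ?eqxx.
Qed.

End ImLearner.

Lemma truncn_div_ltn (R : archiRealFieldType) (c x : R) n : 0 < x ->
  (Num.truncn (c / x) < n)%N -> c < n%:R * x.
Proof.
move=> x0 hn; rewrite -ltr_pdivrMr //.
by apply: lt_le_trans (truncnS_gt _) _; rewrite ler_nat.
Qed.

Lemma transductively_learnable_im (R : realType) (X : eqType) (Y : pointedType)
    (H : set (X -> Y)) :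
  (forall h, H h -> im_card_le2 h) ->
  (forall h h', H h -> H h' -> range h = range h' -> h = h') ->
  transductively_learnable R H.
Proof.
move=> H_le2 H_inj; exists (im_learner H), (fun eps => (Num.truncn (2 / eps)).+1).
move=> eps /andP[e0 _] h Hh n hn S.
apply: le_trans (im_learner_trans_error_le H_inj R S Hh (H_le2 h Hh)) _.
have n_gt := truncn_div_ltn e0 hn.
have n0 : 0 < n%:R :> R by rewrite ltr0n; exact: leq_trans hn.
by rewrite ler_pdivrMr // mulrC ltW.
Qed.

Lemma expr1B_bernoulli (R : realFieldType) (e : R) n : 0 <= e <= 1 ->
  (1 - e) ^+ n * (1 + n%:R * e) <= 1.
Proof.
move=> /andP[e0 e1]; elim: n => [|n IH]; first by rewrite expr0 mul0r addr0 mul1r.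
set q := (1 - e) ^+ n in IH *.
have q0 : 0 <= q by apply: exprn_ge0; lra.
have -> : (1 - e) ^+ n.+1 * (1 + n.+1%:R * e) =
    q * (1 + n%:R * e) - q * (n.+1%:R * (e * e)).
  by rewrite exprS -/q -natr1; ring.
by rewrite lerBlDr (le_trans IH) // lerDl !mulr_ge0.
Qed.

Lemma expr1B_le_div2 (R : realFieldType) (eps delta : R) n :
  0 <= eps <= 1 -> 0 < delta -> 2 < n%:R * (eps * delta) ->
  (1 - eps) ^+ n <= delta / 2.
Proof.
move=> e01 d0 n_gt; have := expr1B_bernoulli n e01.
have : 0 <= (1 - eps) ^+ n by apply: exprn_ge0; case/andP: e01; lra.
move: n_gt; set q := (1 - eps) ^+ n; set N := n%:R => n_gt q0 qN.
nra.
Qed.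

Definition all_in (T : Type) n (U : set T) : set (n.-tuple T) :=
  [set S | forall i, U (tnth S i)].
Arguments all_in {T} n U.

Lemma measurable_all_in d (T : measurableType d) n (U : set T) :
  measurable U -> measurable (all_in n U).
Proof.
move=> mU.
have -> : all_in n U = \bigcap_(i in [set: 'I_n]) ((fun S => tnth S i) @^-1` U).
  by apply/seteqP; split=> S /= SU i *; apply: SU.
apply: fin_bigcap_measurable finite_finset _ => i _.
by rewrite -[_ @^-1` _]setTI; exact: measurable_tnth.
Qed.

Lemma probability_setD_ge d (T : measurableType d) (R : realType)
    (P : probability T R) (A B : set T) (r : R) :
  measurable A -> measurable B -> P A = 1%E -> (P B <= r%:E)%E ->
  ((1 - r)%:E <= P (A `\` B))%E.
Proof.
move=> mA mB PA PB; have mAB : measurable (A `\` B) by exact: measurableD.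
have : (1 <= P (A `\` B) + r%:E)%E.
  have mABB := measurableU _ _ mAB mB.
  rewrite -PA; apply: le_trans (le_measure _ (mem_set mA) (mem_set mABB) _) _.
  - by move=> x Ax; have [Bx|nBx] := pselect (B x); [right|left].
  - exact: le_trans (measureU2 _ mAB mB) (leeD (le_refl _) PB).
by rewrite -(fineK (fin_num_measure P _ mAB)) -EFinD !lee_fin; lra.
Qed.

Definition bad_event (R : realType) d (T : measurableType d)
    (D : probability T R) n (eps : R) (U : set T) : set (n.-tuple T) :=
  [set S | (eps%:E < D (~` U))%E /\ all_in n U S].
Arguments bad_event {R d T} D n eps U.

Section IidSample.
Context (R : realType) d (T : measurableType d) (D : probability T R).
Local Open Scope ereal_scope.

Lemma iid_all_in n (Q : probability (n.-tuple T) R) U :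
  iid_law D Q -> measurable U -> Q (all_in n U) = (fine (D U) ^+ n)%:E.
Proof.
move=> iid mU; rewrite /all_in (iid (fun=> U)) //.
rewrite (eq_bigr (fun=> (fine (D U))%:E)) ?prodEFin ?prodr_const ?card_ord //.
by move=> i _; rewrite fineK // fin_num_measure.
Qed.

Lemma measurable_bad_event n eps U :
  measurable U -> measurable (bad_event D n eps U).
Proof.
move=> mU; have [lt|nlt] := pselect (eps%:E < D (~` U)).
  have -> : bad_event D n eps U = all_in n U by apply/seteqP; split=> S //= [].
  exact: measurable_all_in.
have -> : bad_event D n eps U = set0 by apply/seteqP; split=> S // [].
exact: measurable0.
Qed.

Lemma bad_event_le n (Q : probability (n.-tuple T) R) eps delta U :
  iid_law D Q -> measurable U -> (0 < eps < 1)%R -> (0 < delta)%R ->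
  (2 < n%:R * (eps * delta))%R -> Q (bad_event D n eps U) <= (delta / 2)%:E.
Proof.
move=> iid mU /andP[e0 e1] d0 n_gt; have [lt|nlt] := pselect (eps%:E < D (~` U)).
  have -> : bad_event D n eps U = all_in n U by apply/seteqP; split=> S //= [].
  rewrite iid_all_in // lee_fin; apply: le_trans (expr1B_le_div2 _ d0 n_gt); last first.
    by apply/andP; split; exact: ltW.
  have DU := fin_num_measure D U mU.
  rewrite probability_setC // -(fineK DU) -EFinB lte_fin in lt.
  rewrite lerXn2r ?nnegrE ?fine_ge0 ?measure_ge0 //; lra.
have -> : bad_event D n eps U = set0 by apply/seteqP; split=> S // [].
by rewrite measure0 lee_fin divr_ge0 // ltW.
Qed.

End IidSample.

Section Realizable.
Context (R : realType) d1 d2 (X : measurableType d1) (Y : measurableType d2).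
Variable D : probability (X * Y)%type R.
Local Open Scope ereal_scope.
Variables (hs : X -> Y) (N : set (X * Y)).
Hypotheses (mN : measurable N) (DN0 : D N = 0) (hsN : [set p | hs p.1 != p.2] `<=` N).

Lemma off_null_graph_point : exists x, ~ N (x, hs x).
Proof.
apply: contrapT => /forallNP graphN.
have NT : N = setT.
  apply/seteqP; split=> // -[x y] _; have [<-|ne] := eqVneq (hs x) y.
  - exact: contrapT (graphN x).
  - exact: hsN.
by move: DN0; rewrite NT probability_setT => /eqP; rewrite onee_eq0.
Qed.

Lemma measurable_set1_off_null x : ~ N (x, hs x) -> measurable [set hs x].
Proof.
move=> Nx; have -> : [set hs x] = ~` xsection N x.
  apply/seteqP; split=> y; rewrite /xsection /= inE.
  - by move=> ->.
  - move=> Nxy; apply: contrapT => ne; apply: Nxy; apply: hsN.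
    by apply/eqP => e; apply: ne.
exact/measurableC/measurable_xsection.
Qed.

Lemma risk_le_off_null eps : (0 <= eps)%R -> risk_le D hs eps.
Proof. by move=> e0; exists N => //; split; rewrite // DN0 lee_fin. Qed.

Lemma risk_le_const n (S : n.-tuple (X * Y)) a (T : set Y) eps :
  measurable T -> T a -> (forall x, hs x != a -> ~ T (hs x)) ->
  (forall i, (tnth S i).2 = a) -> ~ bad_event D n eps (setT `*` T) S ->
  risk_le D (fun=> a) eps.
Proof.
move=> mT Ta hsT Sa notbad.
have mU : measurable (setT `*` T : set (X * Y)) by exact: measurableX.
have DV : D (~` (setT `*` T)) <= eps%:E.
  rewrite leNgt; apply/negP => DV_gt; apply: notbad.
  by split=> // i; split=> //=; rewrite Sa.
exists (N `|` ~` (setT `*` T)); first exact/measurableU/measurableC.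
split.
  move=> [x y] /= ay; have [Nxy|Nxy] := pselect (N (x, y)); [by left | right].
  have hxy : hs x = y by apply/eqP; apply: contrapT => /negP ne; apply: Nxy; exact: hsN.
  by move=> [_ /= Ty]; apply: (hsT x); rewrite ?hxy // eq_sym.
apply: le_trans (measureU2 _ mN (measurableC mU)) _.
by rewrite [X in X + _]DN0 add0e.
Qed.

Hypothesis hs2 : im_card_le2 hs.

Lemma good_sample_risk (H : set (X -> Y)) n (S : n.-tuple (X * Y)) x0 eps :
  (forall h h', H h -> H h' -> range h = range h' -> h = h') -> H hs ->
  measurable [set hs x0] -> (0 < n)%N -> (0 <= eps)%R -> all_in n (~` N) S ->
  ~ bad_event D n eps (setT `*` [set hs x0]) S ->
  ~ bad_event D n eps (setT `*` ~` [set hs x0]) S ->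
  risk_le D (im_learner H S) eps.
Proof.
move=> H_inj Hhs mc n0 e0 SN notbad_c notbad_nc.
have hsS : consistent S hs.
  move=> p /tnthP[i ->]; apply/eqP; apply: contrapT => /negP ne; apply: (SN i).
  exact: hsN.
have S0 : tval S != [::] by rewrite -size_eq0 size_tuple -lt0n.
case: (im_learner_dichotomy H_inj Hhs hs2 hsS S0) => [->|[a [-> Sa]]].
  exact: risk_le_off_null.
have {}Sa i : (tnth S i).2 = a by apply: Sa; exact: mem_tnth.
pose x1 := (tnth S (Ordinal n0)).1.
have hs_x1 : hs x1 = a by rewrite hsS ?Sa ?mem_tnth.
have [ac|ac] := eqVneq a (hs x0).
  apply: (risk_le_const mc _ _ Sa notbad_c) => // x.
  by rewrite ac => /eqP.
apply: (risk_le_const (measurableC mc) _ _ Sa notbad_nc) => [/=|x hx]; first exact/eqP.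
case: (im_card_le2_collide hs2 x x1 x0) => [hx1|hx1|->]; last by move/(_ erefl).
- by move: hx; rewrite hx1 hs_x1 eqxx.
- by move: ac; rewrite -hs_x1 hx1 eqxx.
Qed.

End Realizable.

Lemma PAC_learnable_im (R : realType) d1 d2 (X : measurableType d1)
    (Y : measurableType d2) (H : set (X -> Y)) :
  (forall h, H h -> im_card_le2 h) ->
  (forall h h', H h -> H h' -> range h = range h' -> h = h') ->
  PAC_learnable R H.
Proof.
move=> H_le2 H_inj.
exists (im_learner H), (fun eps delta => (Num.truncn (2 / (eps * delta))).+1).
move=> D [hs Hhs [N [mN DN0 hsN]]] eps delta e01 d01 n hn Q iid.
have /andP[e0 _] := e01; have /andP[d0 _] := d01.
have n_gt : 2 < n%:R * (eps * delta) by apply: truncn_div_ltn hn; exact: mulr_gt0.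
have [x0 Nx0] := off_null_graph_point DN0 hsN.
have mc := measurable_set1_off_null mN hsN Nx0.
pose U_c : set (X * Y) := setT `*` [set hs x0].
pose U_nc : set (X * Y) := setT `*` ~` [set hs x0].
have mU_c : measurable U_c by exact: measurableX.
have mU_nc : measurable U_nc by apply: measurableX => //; exact: measurableC.
have mB_c : measurable (bad_event D n eps U_c) by exact: measurable_bad_event.
have mB_nc : measurable (bad_event D n eps U_nc) by exact: measurable_bad_event.
have mNc : measurable (~` N) by exact: measurableC.
exists (all_in n (~` N) `\` (bad_event D n eps U_c `|` bad_event D n eps U_nc)).
  by apply: measurableD; [exact: measurable_all_in | exact: measurableU].
split.
  move=> S [SN notB].
  apply: (good_sample_risk mN DN0 hsN (H_le2 _ Hhs) H_inj Hhs mc) => //.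
  - exact: leq_trans hn.
  - exact: ltW.
  - by move=> ?; apply: notB; left.
  - by move=> ?; apply: notB; right.
apply: probability_setD_ge; [exact: measurable_all_in | exact: measurableU | |].
  by rewrite (iid_all_in iid) // probability_setC // DN0 sube0 expr1n.
rewrite [delta in delta%:E]splitr EFinD; apply: le_trans (measureU2 _ mB_c mB_nc) _.
by apply: leeD; exact: bad_event_le.
Qed.

Theorem proposition1 (R : realType) (d1 d2 : measure_display)
    (X : measurableType d1) (Y : measurableType d2) (H : set (X -> Y)) :
  (forall h, H h -> im_card_le2 h) ->
  (forall h h', H h -> H h' -> range h = range h' -> h = h') ->
  PAC_learnable R H /\ transductively_learnable R H.
Proof.
move=> H_le2 H_inj; split.
- exact: PAC_learnable_im.
- exact: transductively_learnable_im.
Qed.
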